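(* For every $\epsilon>0$, the function $\lambda\mapsto G(e(\lambda))$ is bounded on $(\lambda^*+\epsilon,\infty)$.
   Context: Standing setup. Let $\gamma>0$; let $a_1,\dots,a_p>0$ with weights $\omega_i>0$, $\sum_i\omega_i=1$, and $b_1,\dots,b_n>0$ with weights $\pi_j>0$, $\sum_j\pi_j=1$; put $a^*=\max_i a_i$, $b^*=\max_j b_j$. Let $\mu$ be the limiting spectral distribution of $\mathbf{N}\mathbf{N}^T$ where $\mathbf{N}=\mathbf{A}^{1/2}\mathbf{G}\mathbf{B}^{1/2}$ is $k\times l$, $\mathbf{G}$ has iid mean-zero entries of variance $1/l$, $k/l\to\gamma$, and the spectral distributions of $\mathbf{A},\mathbf{B}$ converge to $\nu=\sum_i\omega_i\delta_{a_i}$ and $\underline{\nu}=\sum_j\pi_j\delta_{b_j}$. $\mu$ is a compactly supported probability measure on $[0,\infty)$; $\lambda^*>0$ is the right endpoint of its support, and $s(\lambda)=\int\frac{d\mu(t)}{t-\lambda}$ for $\lambda>\lambda^*$. Define $G(e)=\sum_{j=1}^n\frac{b_j\pi_j}{1+\gamma b_j e}$. It is known (master equations) that there is a continuous (indeed smooth) real function $e(\lambda)$ on $(\lambda^*,\infty)$, never equal to a pole $-1/(\gamma b_j)$ of $G$ and with $a_iG(e(\lambda))\ne\lambda$, satisfying $s(\lambda)=\sum_{i=1}^p\frac{\omega_i}{a_iG(e(\lambda))-\lambda}$ and $e(\lambda)=\sum_{i=1}^p\frac{a_i\omega_i}{a_iG(e(\lambda))-\lambda}$. *)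

From Stdlib Require Import Reals.
Open Scope R_scope.

(* sumR n f = f 0 + ... + f (n-1)  (indices 0..n-1 stand for 1..n) *)
Fixpoint sumR (n : nat) (f : nat -> R) : R :=
  match n with
  | O => 0
  | S k => sumR k f + f k
  end.

Definition cont_on (f : R -> R) (a b : R) : Prop :=
  forall x, a <= x <= b -> forall eps, 0 < eps ->
    exists d, 0 < d /\ forall y, a <= y <= b -> Rabs (y - x) < d ->
      Rabs (f y - f x) < eps.

(* A (Radon) probability measure on the compact interval [a,b], encoded (Riesz
   representation) by its integration functional I : f |-> \int f dmu, which only
   depends on f restricted to [a,b] and is a positive, normalized linear
   functional on functions continuous on [a,b]. *)
Definition prob_measure_on (I : (R -> R) -> R) (a b : R) : Prop :=
  (forall f g, (forall x, a <= x <= b -> f x = g x) -> I f = I g) /\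
  (forall f g, cont_on f a b -> cont_on g a b ->
      I (fun x => f x + g x) = I f + I g) /\
  (forall c f, cont_on f a b -> I (fun x => c * f x) = c * I f) /\
  (forall f, cont_on f a b -> (forall x, a <= x <= b -> 0 <= f x) -> 0 <= I f) /\
  I (fun _ => 1) = 1.

(* lam is in the support of the measure mu (given by I) supported in [a,lam]:
   every set (lam - d, lam] has positive mu-mass, tested by continuous bumps. *)
Definition right_endpoint_in_support (I : (R -> R) -> R) (a lam : R) : Prop :=
  forall d, 0 < d -> exists f, cont_on f a lam /\
    (forall x, a <= x <= lam -> 0 <= f x) /\
    (forall x, a <= x <= lam -> x <= lam - d -> f x = 0) /\
    0 < I f.

Definition stieltjes (I : (R -> R) -> R) (lam : R) : R :=
  I (fun t => 1 / (t - lam)).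

Definition Gfun (gamma : R) (n : nat) (b pi : nat -> R) (e : R) : R :=
  sumR n (fun j => b j * pi j / (1 + gamma * b j * e)).

From Stdlib Require Import Reals Lra Psatz.
Open Scope R_scope.

(* Multiplying the second master equation by g = G(e(lam)) and using the first
   one together with sum_i w_i = 1 gives the identity
        g * e(lam) = 1 + lam * s(lam).
   Since mu is a probability measure on [0, lamstar], the Stieltjes transform
   satisfies -1/(lam - lamstar) <= s(lam) <= 0, so the right-hand side is
   bounded by C = 1 + lamstar/eps on (lamstar + eps, oo).  Finally, a purely
   algebraic fact about G: if |G(x) * x| <= C, then |G(x)| is bounded by a
   constant depending only on gamma, b, pi and C — for if |G(x)| were large,
   |x| would be small, all denominators 1 + gamma b_j x would be >= 1/2, and
   then G(x) <= 2 sum_j b_j pi_j. *)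

Lemma sumR_nonneg (n : nat) (f : nat -> R) :
  (forall j, (j < n)%nat -> 0 <= f j) -> 0 <= sumR n f.
Proof.
  induction n as [|n IH]; simpl; intros Hf; [lra|].
  assert (0 <= sumR n f) by (apply IH; intros; apply Hf; lia).
  assert (0 <= f n) by (apply Hf; lia).
  lra.
Qed.

Lemma sumR_term_le (n : nat) (f : nat -> R) :
  (forall j, (j < n)%nat -> 0 <= f j) ->
  forall j, (j < n)%nat -> f j <= sumR n f.
Proof.
  induction n as [|n IH]; simpl; intros Hf j Hj; [lia|].
  assert (0 <= f n) by (apply Hf; lia).
  destruct (Nat.eq_dec j n) as [->|Hjn].
  - assert (0 <= sumR n f) by (apply sumR_nonneg; intros; apply Hf; lia). lra.
  - assert (f j <= sumR n f) by (apply IH; [intros; apply Hf|]; lia). lra.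
Qed.

Lemma sumR_le_compat (n : nat) (f g : nat -> R) :
  (forall j, (j < n)%nat -> f j <= g j) -> sumR n f <= sumR n g.
Proof.
  induction n as [|n IH]; simpl; intros Hfg; [lra|].
  assert (sumR n f <= sumR n g) by (apply IH; intros; apply Hfg; lia).
  assert (f n <= g n) by (apply Hfg; lia).
  lra.
Qed.

Lemma sumR_scal (n : nat) (c : R) (f : nat -> R) :
  sumR n (fun j => c * f j) = c * sumR n f.
Proof. induction n as [|n IH]; simpl; [ring | rewrite IH; ring]. Qed.

Lemma master_product_identity (m : nat) (a w : nat -> R) (g lam : R) :
  (forall i, (i < m)%nat -> a i * g - lam <> 0) ->
  g * sumR m (fun i => a i * w i / (a i * g - lam)) =
  sumR m w + lam * sumR m (fun i => w i / (a i * g - lam)).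
Proof.
  induction m as [|m IH]; simpl; intros Hpole; [ring|].
  rewrite Rmult_plus_distr_l, IH by (intros; apply Hpole; lia).
  assert (a m * g - lam <> 0) by (apply Hpole; lia).
  field; assumption.
Qed.

Lemma Gfun_bounds_of_denominators (gamma : R) (n : nat) (b pi : nat -> R) (x : R) :
  (forall j, (j < n)%nat -> 0 <= b j * pi j) ->
  (forall j, (j < n)%nat -> 1/2 <= 1 + gamma * b j * x) ->
  0 <= Gfun gamma n b pi x <= 2 * sumR n (fun j => b j * pi j).
Proof.
  intros Hbp Hden. unfold Gfun. split.
  - apply sumR_nonneg. intros j Hj.
    apply Rle_mult_inv_pos; [exact (Hbp j Hj) | specialize (Hden j Hj); lra].
  - rewrite <- sumR_scal. apply sumR_le_compat. intros j Hj.
    specialize (Hden j Hj). specialize (Hbp j Hj).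
    set (d := 1 + gamma * b j * x) in *.
    assert (Hq : b j * pi j / d * d = b j * pi j) by (field; lra).
    assert (0 <= b j * pi j / d) by (apply Rle_mult_inv_pos; lra).
    nra.
Qed.

Lemma Gfun_bound_of_product_bound (gamma : R) (n : nat) (b pi : nat -> R) (x C : R) :
  0 < gamma ->
  (forall j, (j < n)%nat -> 0 < b j) ->
  (forall j, (j < n)%nat -> 0 <= pi j) ->
  Rabs (Gfun gamma n b pi x * x) <= C ->
  Rabs (Gfun gamma n b pi x) <=
    2 * sumR n (fun j => b j * pi j) + 2 * (gamma * (sumR n b + 1)) * C + 1.
Proof.
  intros Hgam Hb Hpi Hprod.
  set (g := Gfun gamma n b pi x) in *.
  set (Sbp := sumR n (fun j => b j * pi j)).
  set (Q := gamma * (sumR n b + 1)).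
  assert (HSbp : 0 <= Sbp).
  { apply sumR_nonneg. intros j Hj. specialize (Hb j Hj). specialize (Hpi j Hj). nra. }
  assert (HQ : 0 < Q).
  { assert (0 <= sumR n b) by (apply sumR_nonneg; intros; left; auto).
    unfold Q; apply Rmult_lt_0_compat; lra. }
  assert (HC : 0 <= C) by (pose proof (Rabs_pos (g * x)); lra).
  assert (HQC : 0 <= Q * C) by (apply Rmult_le_pos; lra).
  rewrite Rabs_mult in Hprod.
  destruct (Rle_or_lt (Rabs g) (2 * Sbp + 2 * Q * C + 1)) as [Hok|Hbig]; [exact Hok|].
  exfalso.
  (* |g| is large, hence |x| is small ... *)
  assert (Hsmall : Q * Rabs x <= 1/2).
  { apply Rnot_lt_le. intros Hlarge.
    assert (Q * (Rabs g * Rabs x) <= Q * C) by (apply Rmult_le_compat_l; lra).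
    assert (0 < Rabs g * (Q * Rabs x - 1/2)) by (apply Rmult_lt_0_compat; lra).
    assert (Rabs g * (Q * Rabs x - 1/2) = Q * (Rabs g * Rabs x) - Rabs g / 2) by field.
    lra. }
  (* ... so every denominator of G is at least 1/2 ... *)
  assert (Hden : forall j, (j < n)%nat -> 1/2 <= 1 + gamma * b j * x).
  { intros j Hj.
    assert (b j <= sumR n b) by (apply sumR_term_le; [intros; left|]; auto).
    assert (Hx : - Rabs x <= x) by (pose proof (Rabs_Ropp x); pose proof (Rle_abs (- x)); lra).
    assert (Hgb : 0 <= gamma * b j) by (pose proof (Hb j Hj); apply Rmult_le_pos; lra).
    assert (gamma * b j <= Q) by (unfold Q; apply Rmult_le_compat_l; lra).
    assert (gamma * b j * Rabs x <= Q * Rabs x)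
      by (apply Rmult_le_compat_r; [apply Rabs_pos | assumption]).
    assert (gamma * b j * (- Rabs x) <= gamma * b j * x)
      by (apply Rmult_le_compat_l; assumption).
    lra. }
  (* ... and then g <= 2 Sbp, contradicting the size of |g|. *)
  assert (Hbp : forall j, (j < n)%nat -> 0 <= b j * pi j).
  { intros j Hj. specialize (Hb j Hj). specialize (Hpi j Hj). nra. }
  destruct (Gfun_bounds_of_denominators gamma n b pi x Hbp Hden) as [Hg0 Hg1].
  fold g Sbp in Hg0, Hg1. rewrite Rabs_right in Hbig by lra. nra.
Qed.

Lemma cont_on_const (c a b : R) : cont_on (fun _ => c) a b.
Proof.
  intros x _ eps Heps. exists 1. split; [lra|]. intros y _ _.
  unfold Rminus; rewrite Rplus_opp_r, Rabs_R0; lra.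
Qed.

Lemma cont_on_add (f g : R -> R) (a b : R) :
  cont_on f a b -> cont_on g a b -> cont_on (fun t => f t + g t) a b.
Proof.
  intros Hf Hg x Hx eps Heps.
  destruct (Hf x Hx (eps / 2)) as [d1 [Hd1 H1]]; [lra|].
  destruct (Hg x Hx (eps / 2)) as [d2 [Hd2 H2]]; [lra|].
  exists (Rmin d1 d2). split; [now apply Rmin_pos|]. intros y Hy Hyx.
  specialize (H1 y Hy ltac:(pose proof (Rmin_l d1 d2); lra)).
  specialize (H2 y Hy ltac:(pose proof (Rmin_r d1 d2); lra)).
  replace (f y + g y - (f x + g x)) with ((f y - f x) + (g y - g x)) by ring.
  pose proof (Rabs_triang (f y - f x) (g y - g x)). lra.
Qed.

Lemma cont_on_scal (c : R) (f : R -> R) (a b : R) :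
  cont_on f a b -> cont_on (fun t => c * f t) a b.
Proof.
  intros Hf x Hx eps Heps.
  assert (Hc : 0 < Rabs c + 1) by (pose proof (Rabs_pos c); lra).
  destruct (Hf x Hx (eps / (Rabs c + 1))) as [d [Hd H]];
    [apply Rdiv_lt_0_compat; lra|].
  exists d. split; [exact Hd|]. intros y Hy Hyx.
  specialize (H y Hy Hyx).
  replace (c * f y - c * f x) with (c * (f y - f x)) by ring. rewrite Rabs_mult.
  assert (Hm : Rabs (f y - f x) * (Rabs c + 1) < eps).
  { apply (Rmult_lt_compat_r (Rabs c + 1)) in H; [|lra].
    unfold Rdiv in H. rewrite Rmult_assoc, Rinv_l in H by lra. lra. }
  pose proof (Rabs_pos c). pose proof (Rabs_pos (f y - f x)). nra.
Qed.

Lemma cont_on_stieltjes_kernel (lam a b : R) :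
  b < lam -> cont_on (fun t => 1 / (t - lam)) a b.
Proof.
  intros Hlam x Hx eps Heps.
  assert (Hcont : continuity_pt (fct_cte 1 / (id - fct_cte lam))%F x).
  { apply continuity_pt_div.
    - apply continuity_pt_const; intros ? ?; reflexivity.
    - apply continuity_pt_minus;
        [apply derivable_continuous_pt, derivable_pt_id
        | apply continuity_pt_const; intros ? ?; reflexivity].
    - unfold minus_fct, fct_cte, id. lra. }
  destruct (Hcont eps Heps) as [d [Hd Hclose]].
  exists d; split; [exact Hd|]. intros y _ Hyx.
  destruct (Req_dec y x) as [->|Hyx'].
  - unfold Rminus; rewrite Rplus_opp_r, Rabs_R0; lra.
  - apply Hclose. split; [split; [exact I | auto] | exact Hyx].
Qed.

Lemma integral_le (I : (R -> R) -> R) (a b : R) (f g : R -> R) :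
  prob_measure_on I a b -> cont_on f a b -> cont_on g a b ->
  (forall x, a <= x <= b -> f x <= g x) -> I f <= I g.
Proof.
  intros [_ [Hadd [Hscal [Hpos _]]]] Hf Hg Hfg.
  assert (Hmf : cont_on (fun t => -1 * f t) a b) by (now apply cont_on_scal).
  assert (H : 0 <= I (fun t => g t + -1 * f t)).
  { apply Hpos; [now apply cont_on_add | intros x Hx; specialize (Hfg x Hx); lra]. }
  rewrite Hadd, Hscal in H by assumption. lra.
Qed.

Lemma integral_const (I : (R -> R) -> R) (a b c : R) :
  prob_measure_on I a b -> I (fun _ => c) = c.
Proof.
  intros [Hext [_ [Hscal [_ H1]]]].
  rewrite (Hext (fun _ => c) (fun _ => c * 1)) by (intros; ring).
  rewrite Hscal by apply cont_on_const. rewrite H1; ring.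
Qed.

Lemma stieltjes_bounds (I : (R -> R) -> R) (lamstar lam : R) :
  prob_measure_on I 0 lamstar -> lamstar < lam ->
  - / (lam - lamstar) <= stieltjes I lam <= 0.
Proof.
  intros Hmu Hlam. unfold stieltjes.
  pose proof (cont_on_stieltjes_kernel lam 0 lamstar Hlam) as Hker.
  split.
  - rewrite <- (integral_const I 0 lamstar (- / (lam - lamstar))) by exact Hmu.
    apply (integral_le I 0 lamstar); [exact Hmu | apply cont_on_const | exact Hker |].
    intros x Hx.
    assert (/ (lam - x) <= / (lam - lamstar)) by (apply Rinv_le_contravar; lra).
    replace (1 / (x - lam)) with (- / (lam - x)) by (field; lra). lra.
  - rewrite <- (integral_const I 0 lamstar 0) by exact Hmu.
    apply (integral_le I 0 lamstar); [exact Hmu | exact Hker | apply cont_on_const |].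
    intros x Hx.
    assert (0 < / (lam - x)) by (apply Rinv_0_lt_compat; lra).
    replace (1 / (x - lam)) with (- / (lam - x)) by (field; lra). lra.
Qed.

Lemma one_plus_lam_stieltjes_bound (I : (R -> R) -> R) (lamstar eps lam : R) :
  0 < lamstar -> 0 < eps -> prob_measure_on I 0 lamstar -> lamstar + eps < lam ->
  Rabs (1 + lam * stieltjes I lam) <= 1 + lamstar / eps.
Proof.
  intros Hls Heps Hmu Hlam.
  destruct (stieltjes_bounds I lamstar lam Hmu ltac:(lra)) as [Hlo Hhi].
  set (s := stieltjes I lam) in *.
  assert (Hratio : lamstar / (lam - lamstar) <= lamstar / eps).
  { unfold Rdiv. apply Rmult_le_compat_l; [lra|]. apply Rinv_le_contravar; lra. }
  assert (Hedge : 1 - lam / (lam - lamstar) = - (lamstar / (lam - lamstar)))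
    by (field; lra).
  assert (Hlams : lam * (- / (lam - lamstar)) <= lam * s)
    by (apply Rmult_le_compat_l; lra).
  replace (lam * (- / (lam - lamstar))) with (- (lam / (lam - lamstar))) in Hlams
    by (field; lra).
  assert (lam * s <= 0) by (rewrite <- (Rmult_0_r lam); apply Rmult_le_compat_l; lra).
  assert (0 <= lamstar / eps) by (apply Rlt_le, Rdiv_lt_0_compat; lra).
  apply Rabs_le. split; lra.
Qed.

Theorem lemma3p2
  (gamma : R) (p n : nat) (a w b pi : nat -> R)
  (I : (R -> R) -> R) (lamstar : R) (e : R -> R) :
  0 < gamma ->
  (forall i, (i < p)%nat -> 0 < a i) ->
  (forall i, (i < p)%nat -> 0 < w i) ->
  sumR p w = 1 ->
  (forall j, (j < n)%nat -> 0 < b j) ->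
  (forall j, (j < n)%nat -> 0 < pi j) ->
  sumR n pi = 1 ->
  (* mu: probability measure supported in [0, lamstar], lamstar = right endpoint *)
  0 < lamstar ->
  prob_measure_on I 0 lamstar ->
  right_endpoint_in_support I 0 lamstar ->
  (* master equations *)
  (forall lam, lamstar < lam -> continuity_pt e lam) ->
  (forall lam, lamstar < lam -> forall j, (j < n)%nat ->
      e lam <> - / (gamma * b j)) ->
  (forall lam, lamstar < lam -> forall i, (i < p)%nat ->
      a i * Gfun gamma n b pi (e lam) <> lam) ->
  (forall lam, lamstar < lam ->
      stieltjes I lam =
      sumR p (fun i => w i / (a i * Gfun gamma n b pi (e lam) - lam))) ->
  (forall lam, lamstar < lam ->
      e lam =
      sumR p (fun i => a i * w i / (a i * Gfun gamma n b pi (e lam) - lam))) ->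
  forall eps, 0 < eps ->
    exists M, forall lam, lamstar + eps < lam ->
      Rabs (Gfun gamma n b pi (e lam)) <= M.
Proof.
  intros Hgam _ _ Hwsum Hb Hpi _ Hls Hmu _ _ _ Hpole Hs He eps Heps.
  set (C := 1 + lamstar / eps).
  exists (2 * sumR n (fun j => b j * pi j) + 2 * (gamma * (sumR n b + 1)) * C + 1).
  intros lam Hlam.
  apply Gfun_bound_of_product_bound;
    [exact Hgam | exact Hb | intros j Hj; left; auto |].
  assert (Hprod : Gfun gamma n b pi (e lam) * e lam = 1 + lam * stieltjes I lam).
  { pose proof (He lam ltac:(lra)) as He_lam. pose proof (Hs lam ltac:(lra)) as Hs_lam.
    set (g := Gfun gamma n b pi (e lam)) in *.
    rewrite Hs_lam, He_lam, <- Hwsum. apply master_product_identity.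
    intros i Hi. pose proof (Hpole lam ltac:(lra) i Hi) as Hne. fold g in Hne. lra. }
  rewrite Hprod. now apply one_plus_lam_stieltjes_bound.
Qed.
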